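(* Let $C$ be a convex subset of a topological vector space and let $f,g:C\to\mathbb{R}$ be continuous functions such that $g$ is convex and non-negative, $0$ belongs to the image of $g$, and $g^{-1}(0)\subseteq f^{-1}(0)$. Let $\lambda\ge 0$ and consider the problem of minimising $g(v)$ over $v\in C$ subject to $f(v)\ge\lambda$. Then every minimiser $v$ of this problem satisfies $f(v)=\lambda$; in other words, the set of minimisers of $g$ over $\{v\in C: f(v)\ge\lambda\}$ coincides with the set of minimisers of $g$ over $\{v\in C: f(v)=\lambda\}$. *)

From HB Require Import structures.
From mathcomp Require Import all_boot all_order all_algebra.
From mathcomp Require Import all_classical all_reals all_analysis.
Set Implicit Arguments. Unset Strict Implicit. Unset Printing Implicit Defensive.
Import Order.TTheory GRing.Theory Num.Theory.
Local Open Scope classical_set_scope.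
Local Open Scope ring_scope.

Definition is_constrained_minimiser (R : realType) (E : topologicalLmodType R)
  (C : set E) (f g : E -> R) (lam : R) (v : E) : Prop :=
  [/\ C v, lam <= f v & forall w, C w -> lam <= f w -> g v <= g w].

From HB Require Import structures.
From mathcomp Require Import all_boot all_order all_algebra.
From mathcomp Require Import all_classical all_reals all_analysis.
From mathcomp Require Import lra.
Set Implicit Arguments. Unset Strict Implicit. Unset Printing Implicit Defensive.
Import Order.TTheory GRing.Theory Num.Theory.
Local Open Scope classical_set_scope.
Local Open Scope ring_scope.
Local Open Scope convex_scope.

(* If the constraint were slack at a minimiser v, v would stay a minimiser
   over all of C: moving from v a little towards any w in C keeps the
   constraint satisfied by continuity of f, and convexity of g then forces
   g v <= g w.  Taking for w a zero of g gives g v = 0, hence f v = 0 <= lam,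
   contradicting the slackness. *)

Section convex_segment.
Context (R : realType) (E : lmodType R).
Implicit Types (C : set (convex_lmodType E)) (v w : E) (s : R).

Lemma conv_segmentE v w s (s0 : 0 <= s) (s1 : s <= 1) :
  exists t : {i01 R},
    t%:num = 1 - s /\ (v : convex_lmodType E) <| t |> w = v + s *: (w - v).
Proof.
have t0 : 0 <= 1 - s by lra.
have t1 : 1 - s <= 1 by lra.
exists (Itv01 t0 t1); split => //.
change ((1 - s) *: v + (1 - (1 - s)) *: w = v + s *: (w - v)).
by rewrite subKr scalerBl scale1r scalerBr -addrA [_ + s *: w]addrC.
Qed.

Lemma convex_set_segment C v w s :
  convex_set C -> C v -> C w -> 0 <= s -> s <= 1 -> C (v + s *: (w - v)).
Proof.
move=> convC Cv Cw s0 s1; have [t [_ <-]] := conv_segmentE v w s0 s1.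
by apply: set_mem; apply: convC; apply: mem_set.
Qed.

Lemma convex_function_segment C (g : E -> R) v w s :
  convex_function C g -> C v -> C w -> 0 <= s -> s <= 1 ->
  g (v + s *: (w - v)) <= (1 - s) * g v + s * g w.
Proof.
move=> convg Cv Cw s0 s1; have [t [tE <-]] := conv_segmentE v w s0 s1.
have := convg t v w (mem_set Cv) (mem_set Cw).
by rewrite convRE tE /unstable.onem subKr.
Qed.

End convex_segment.

Section segment_near.
Context (R : realType) (E : topologicalLmodType R).

Lemma cvg_line0 (v d : E) : v + s *: d @[s --> (0 : R^o)] --> v.
Proof.
have cvg_pair0 : (s, d) @[s --> (0 : R^o)] --> ((0 : R^o), d).
  by apply: (@cvg_pair _ _ _ _ (nbhs (0 : R^o))); [exact: cvg_id | exact: cvg_cst].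
have cvg_scale := cvg_comp _ _ cvg_pair0 (@scale_continuous R E ((0 : R^o), d)).
have cvg_sum : (v, s *: d) @[s --> (0 : R^o)] --> (v, (0 : R) *: d).
  by apply: (@cvg_pair _ _ _ _ (nbhs v)); [exact: cvg_cst | exact: cvg_scale].
have := cvg_comp _ _ cvg_sum (@add_continuous E (v, (0 : R) *: d)).
by rewrite scale0r addr0.
Qed.

Lemma near_within_segment (C : set (convex_lmodType E)) (P : E -> Prop) (v w : E) :
  convex_set C -> C v -> C w -> (\forall x \near within C (nbhs v), P x) ->
  exists2 s, 0 < s <= 1 & P (v + s *: (w - v)).
Proof.
move=> convC Cv Cw nearP.
have nearCP : nbhs v (fun x => C x -> P x) := nearP.
have /nbhs_ballP [e /= e0 ballP] := cvg_line0 (v := v) (w - v) nearCP.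
have [s [s0 se s1]] : exists s, [/\ 0 < s, s < e & s <= 1].
  by case: (leP e 1) => e1; [exists (e / 2) | exists (1 / 2)]; split; lra.
exists s; first by rewrite s0 s1.
apply: (ballP s); last exact: convex_set_segment (ltW s0) s1.
by rewrite /ball /= sub0r normrN gtr0_norm.
Qed.

End segment_near.

Lemma constrained_minimiser_slack_global (R : realType) (E : topologicalLmodType R)
    (C : set E) (f g : E -> R) (lam : R) (v : E) :
  convex_set (C : set (convex_lmodType E)) ->
  (f : E -> R^o) @ within C (nbhs v) --> (f v : R^o) ->
  convex_function (C : set (convex_lmodType E)) g ->
  is_constrained_minimiser C f g lam v -> lam < f v ->
  forall w, C w -> g v <= g w.
Proof.
move=> convC fv convg [Cv _ vmin] slack w Cw.
have nearf : \forall x \near within C (nbhs v), lam < f x.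
  exact: (@cvgr_gt R _ _ _ (f : E -> R^o) (f v) fv lam slack).
have [s /andP[s0 s1] fx] := near_within_segment convC Cv Cw nearf.
have g_x_le := convex_function_segment convg Cv Cw (ltW s0) s1.
have g_v_le := vmin _ (convex_set_segment convC Cv Cw (ltW s0) s1) (ltW fx).
have : s * g v <= s * g w by lra.
by rewrite ler_pM2l.
Qed.

Theorem lemma4 (R : realType) (E : topologicalLmodType R) (C : set E)
  (f g : E -> R) (lam : R) :
  convex_set (C : set (convex_lmodType E)) ->
  {within C, continuous (f : E -> R^o)} ->
  {within C, continuous (g : E -> R^o)} ->
  convex_function (C : set (convex_lmodType E)) g ->
  (forall w, C w -> 0 <= g w) ->
  (exists2 w, C w & g w = 0) ->
  (forall w, C w -> g w = 0 -> f w = 0) ->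
  0 <= lam ->
  forall v, is_constrained_minimiser C f g lam v -> f v = lam.
Proof.
move=> convC fc _ convg g_ge0 [w0 Cw0 gw0] g0_f0 lam0 v vmin.
have [Cv lam_le _] := vmin.
apply/eqP; rewrite eq_le lam_le andbT leNgt; apply/negP => slack.
have fv : (f : E -> R^o) @ within C (nbhs v) --> (f v : R^o).
  by move/subspace_continuousP: fc; apply.
have gv0 : g v = 0.
  apply/eqP; rewrite eq_le g_ge0 // andbT -gw0.
  exact: constrained_minimiser_slack_global convC fv convg vmin slack w0 Cw0.
by move: slack; rewrite (g0_f0 v Cv gv0) ltNge lam0.
Qed.
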